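(* Let $\mathbb{K}$ be a field, $m\ge 3$, $R=\mathbb{K}[T_1,\dots,T_m]$, and $I=\langle T_1^{a_1},\dots,T_m^{a_m},T_1^{b_1}\cdots T_m^{b_m}\rangle$ with $0\le b_i<a_i$ for all $i$ and $b_i\ne0$ for at least two $i$; let $L\subset S=R[X_1,\dots,X_m,W]$ be the defining ideal of its Rees algebra. Let $\mathcal{C}\subset\{\mathbf{c}\in\mathbb{N}^m\mid |\mathbf{c}|\ge2\}$ be a finite set such that $\Gamma_0\cup\{\mathcal{P}(W^{|\mathbf{c}|},\mathbf{X}^{\mathbf{c}})\mid \mathbf{c}\in\mathcal{C}\}$ is a Gröbner basis of $L$ with respect to $\tau$, and such that $\mathcal{C}$ is closed: if $\mathbf{c}\in\mathcal{C}$, $|\mathbf{c}'|\ge 2$ and $\mathbf{c}'\prec_{\tau'}\mathbf{c}$, then $\mathbf{c}'\in\mathcal{C}$. Order $\mathcal{C}=\{\mathbf{c}_1\prec_{\tau'}\cdots\prec_{\tau'}\mathbf{c}_N\}$ and for $0\le j\le N$ set $\mathcal{H}_j=\langle\Gamma_0\cup\{\mathcal{P}(W^{|\mathbf{c}_i|},\mathbf{X}^{\mathbf{c}_i})\mid 1\le i\le j\}\rangle$. Then for every $1\le j\le N$, the colon ideal $\operatorname{in}(\mathcal{H}_{j-1}):\operatorname{in}(\mathcal{P}(W^{|\mathbf{c}_j|},\mathbf{X}^{\mathbf{c}_j}))$ is extended from $R$, i.e., it equals $(J\cap R)S$ where $J$ denotes this colon ideal.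
   Context: Write $\mathbf{T}^{\mathbf{b}}=T_1^{b_1}\cdots T_m^{b_m}$. $L$ is the kernel of the $R$-algebra map $S\to R[Z]$, $X_i\mapsto T_i^{a_i}Z$, $W\mapsto\mathbf{T}^{\mathbf{b}}Z$. Set $X_{m+1}:=W$; for $\mathbf{c}\in\mathbb{N}^m$, $\mathbf{X}^{\mathbf{c}}=\prod X_i^{c_i}$ and $|\mathbf{c}|=\sum c_i$. Let $\Psi:S\to R$ be the $R$-algebra map $X_i\mapsto T_i^{a_i}$, $W\mapsto\mathbf{T}^{\mathbf{b}}$. For monomials $M,N$ in $X_1,\dots,X_m,W$, with $g=\gcd(\Psi(M),\Psi(N))$, set $\mathcal{P}(M,N)=\frac{\Psi(N)}{g}M-\frac{\Psi(M)}{g}N$. $\Gamma_0=\{\mathcal{P}(X_i,X_j)\mid 1\le j<i\le m+1\}$. The order $\tau$ is lex on $S$ with $W>X_m>\cdots>X_1>T_1>\cdots>T_m$; $\operatorname{in}(\cdot)$ denotes leading monomial / initial ideal with respect to $\tau$. The total order $\tau'$ on $\mathbb{N}^m$: $\boldsymbol\alpha\prec_{\tau'}\boldsymbol\beta$ iff $|\boldsymbol\alpha|<|\boldsymbol\beta|$, or $|\boldsymbol\alpha|=|\boldsymbol\beta|$ and there is $i_0$ with $\alpha_{i_0}>\beta_{i_0}$ and $\alpha_i=\beta_i$ for all $i>i_0$. *)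

From HB Require Import structures.
From mathcomp Require Import all_boot all_order all_algebra.
From mathcomp Require Import mpoly.
Set Implicit Arguments. Unset Strict Implicit. Unset Printing Implicit Defensive.
Import GRing.Theory.
Local Open Scope ring_scope.

(* Number of variables of S = K[T_1..T_m, X_1..X_m, W].
   Layout of variable indices (0-based): T_{i+1} |-> i (i < m),
   X_{i+1} |-> m + i (i < m), W = X_{m+1} |-> m + m. *)
Definition nS (m : nat) : nat := (m + m).+1.

Section Defs.
Variables (K : fieldType) (m : nat) (a b : 'I_m -> nat).

Local Notation n := (nS m).
Local Notation SP := {mpoly K[n]}.

Definition tidx (i : 'I_m) : 'I_n := inord i.
Definition xidx (i : 'I_m) : 'I_n := inord (m + i).
Definition widx : 'I_n := inord (m + m).

(* X_{i+1} for i < m, and X_{m+1} = W for i = m, as monomials *)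
Definition xw (i : nat) : 'X_{1..n} := U_(@inord (m + m) (m + i))%MM.

Definition tmono (e : 'I_m -> nat) : 'X_{1..n} :=
  [multinom oapp e 0%N (insub (nat_of_ord k) : option 'I_m) | k < n].

Definition xmono (c : 'I_m -> nat) : 'X_{1..n} :=
  [multinom (if m <= k then oapp c 0%N (insub (k - m)%N : option 'I_m) else 0%N)
   | k < n].

(* exponent vector (in T) of Psi(M), Psi : X_i |-> T_i^{a_i}, W |-> T^b *)
Definition psiT (M : 'X_{1..n}) (i : 'I_m) : nat :=
  (M (tidx i) + a i * M (xidx i) + b i * M widx)%N.

(* P(M,N) = Psi(N)/g * M - Psi(M)/g * N,  g = gcd(Psi M, Psi N) *)
Definition Ppol (M N : 'X_{1..n}) : SP :=
  let g := fun i => minn (psiT M i) (psiT N i) in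
  'X_[mnm_add (tmono (fun i => psiT N i - g i)%N) M]
  - 'X_[mnm_add (tmono (fun i => psiT M i - g i)%N) N].

Definition Gamma0 (f : SP) : Prop :=
  exists i j : nat, (j < i <= m)%N /\ f = Ppol (xw i) (xw j).

Definition cabs (c : {ffun 'I_m -> nat}) : nat := (\sum_(i < m) c i)%N.

Definition Pc (c : {ffun 'I_m -> nat}) : SP :=
  Ppol (U_(widx) *+ cabs c)%MM (xmono c).

Definition tault (al be : {ffun 'I_m -> nat}) : bool :=
  (cabs al < cabs be)%N ||
  ((cabs al == cabs be) &&
   [exists i0 : 'I_m, (be i0 < al i0)%N &&
      [forall i : 'I_m, (i0 < i)%N ==> (al i == be i)]]).

(* lex order tau: W > X_m > ... > X_1 > T_1 > ... > T_m *)
Definition ord_list : seq 'I_n :=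
  [seq inord k | k <- (m + m)%N :: rev (iota m m) ++ iota 0 m].
Definition lexkey (M : 'X_{1..n}) : seq nat := [seq M k | k <- ord_list].
Fixpoint lexlt (s1 s2 : seq nat) : bool :=
  match s1, s2 with
  | x :: s1', y :: s2' => (x < y)%N || ((x == y) && lexlt s1' s2')
  | _, _ => false
  end.
Definition mlt_tau (M N : 'X_{1..n}) : bool := lexlt (lexkey M) (lexkey N).

(* leading monomial w.r.t. tau (the tau-maximum of the support; 0 for f = 0) *)
Definition lm (f : SP) : 'X_{1..n} :=
  foldr (fun x acc => if mlt_tau acc x then x else acc) 0%MM (msupp f).

Definition ideal_gen (G : SP -> Prop) : SP -> Prop :=
  fun f => exists s : seq (SP * SP),
    (forall p, p \in s -> G p.2) /\ f = \sum_(p <- s) p.1 * p.2.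

Definition init_ideal (I : SP -> Prop) : SP -> Prop :=
  ideal_gen (fun f => exists g, I g /\ g != 0 /\ f = 'X_[lm g]).

Definition colon (I : SP -> Prop) (g : SP) : SP -> Prop := fun f => I (f * g).

Definition inR (f : SP) : Prop :=
  forall M, M \in msupp f -> forall k : 'I_n, (m <= k)%N -> M k = 0%N.

Definition extended (J : SP -> Prop) : SP -> Prop :=
  ideal_gen (fun g => J g /\ inR g).

(* L = kernel of S -> R[Z], T_i |-> T_i, X_i |-> T_i^{a_i} Z, W |-> T^b Z;
   R[Z] = K[T_1..T_m, Z] with Z the variable of index m *)
Definition reesT (k : nat) : {mpoly K[m.+1]} := 'X_(@inord m k).
Definition reesZ : {mpoly K[m.+1]} := 'X_(@inord m m).
Definition aN (k : nat) : nat := oapp a 0%N (insub k : option 'I_m).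
Definition reesImg (k : 'I_n) : {mpoly K[m.+1]} :=
  if (k < m)%N then reesT k
  else if (k < m + m)%N then reesT (k - m) ^+ aN (k - m) * reesZ
  else (\prod_(i < m) (reesT i ^+ b i)) * reesZ.
Definition reesL (f : SP) : Prop := mmap (@mpolyC m.+1 K) reesImg f = 0.

Definition groebner (G I : SP -> Prop) : Prop :=
  (forall g, G g -> I g) /\ (forall f, init_ideal I f <-> init_ideal G f).

(* H_j = < Gamma0 cup { P(W^{|c_i|}, X^{c_i}) | 1 <= i <= j } > ,
   with C = [:: c_1; ...; c_N] *)
Definition Hj (C : seq {ffun 'I_m -> nat}) (j : nat) : SP -> Prop :=
  ideal_gen (fun f => Gamma0 f \/
    exists i, (i < j)%N /\ f = Pc (nth [ffun=> 0%N] C i)).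

End Defs.

From Pilot Require Import Defs.
From HB Require Import structures.
From mathcomp Require Import all_boot all_order all_algebra.
From mathcomp Require Import mpoly zify.
From Stdlib Require Import Classical.
Set Implicit Arguments. Unset Strict Implicit. Unset Printing Implicit Defensive.
Import GRing.Theory.
Local Open Scope ring_scope.

(* The generators of H_j (Gamma_0 and the P(W^|c_i|, X^c_i), i < j) form a
   Groebner basis of H_j as soon as every c with 2 <= |c| < k is one of these
   c_i, where k bounds their |c_i|.  Let M be the leading monomial of some
   g in H_j.  If M has no W, then the leading monomial of some element of the
   Groebner basis of L divides M, and it is not that of a P(W^|c|, X^c), which
   contains W^|c|.  Otherwise suppose that no generator's leading monomial
   divides M.  The "fiber" of M (the monomials with the Psi-image of M and its
   degree in X_1..X_m, W, which are M or have a larger W-degree) is finite and,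
   by this non-divisibility, closed under the exchanges t X^A <-> t X^B for
   every generator X^A - X^B.  Hence the sum of the coefficients over the fiber
   vanishes on H_j, while on g it is the leading coefficient.
   Now if a generator's leading monomial divides u X^N, with
   u = in(P(W^|c_j|, X^c_j)), then one already divides u times the T-part of
   X^N: the leading monomial of P(W^|c|, X^c) is W^|c| T^gam, and each term of
   a binomial of Gamma_0 in two X's contains a pure power T_p^a_p, which the
   W-move P(W, X_p) turns into a divisor W T_p^(a_p - b_p). *)

Section Coordinates.
Variable m : nat.
Local Notation n := (nS m).
Implicit Types (M N : 'X_{1..n}) (i l : 'I_m).

Lemma tidxE i : tidx i = i :> nat.
Proof. by rewrite /tidx inordK // /nS; have := ltn_ord i; lia. Qed.

Lemma xidxE i : xidx i = (m + i)%N :> nat.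
Proof. by rewrite /xidx inordK // /nS; have := ltn_ord i; lia. Qed.

Lemma widxE : widx m = (m + m)%N :> nat.
Proof. by rewrite /widx inordK. Qed.

Lemma idx_cases (k : 'I_n) :
  [\/ exists i, k = tidx i, exists i, k = xidx i | k = widx m].
Proof.
have hk : (k < (m + m).+1)%N by [].
case: (ltnP k m) => h1.
  by apply: Or31; exists (Ordinal h1); apply: val_inj; rewrite /= tidxE.
case: (ltnP k (m + m)) => h2; last by apply: Or33; apply: val_inj; rewrite /= widxE; lia.
have h3 : (k - m < m)%N by lia.
by apply: Or32; exists (Ordinal h3); apply: val_inj; rewrite /= xidxE /=; lia.
Qed.

Lemma mnm_TXW_eq M N :
  (forall i, M (tidx i) = N (tidx i)) -> (forall i, M (xidx i) = N (xidx i)) ->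
  M (widx m) = N (widx m) -> M = N.
Proof. by move=> hT hX hW; apply/mnmP => k; case: (idx_cases k) => [[i ->]|[i ->]|->]. Qed.

Lemma lepm_TXW M N :
  (forall i, M (tidx i) <= N (tidx i))%N -> (forall i, M (xidx i) <= N (xidx i))%N ->
  (M (widx m) <= N (widx m))%N -> (M <= N)%MM.
Proof.
by move=> hT hX hW; apply/mnm_lepP => k; case: (idx_cases k) => [[i ->]|[i ->]|->].
Qed.

Definition wmono (k : nat) : 'X_{1..n} := (U_(widx m) *+ k)%MM.

Definition evec l : {ffun 'I_m -> nat} := [ffun i => (i == l) : nat].

Definition tpart N : 'X_{1..n} := Defs.tmono (fun i => N (tidx i)).

Lemma tmono_T (e : 'I_m -> nat) i : Defs.tmono e (tidx i) = e i.
Proof. by rewrite mnmE tidxE; case: insubP => [j _ /val_inj -> //|]; rewrite ltn_ord. Qed.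

Lemma tmono_X (e : 'I_m -> nat) i : Defs.tmono e (xidx i) = 0%N.
Proof. by rewrite mnmE xidxE; case: insubP => [j /=|//]; lia. Qed.

Lemma tmono_W (e : 'I_m -> nat) : Defs.tmono e (widx m) = 0%N.
Proof. by rewrite mnmE widxE; case: insubP => [j /=|//]; lia. Qed.

Lemma xmono_T (c : 'I_m -> nat) i : xmono c (tidx i) = 0%N.
Proof. by rewrite mnmE tidxE leqNgt ltn_ord. Qed.

Lemma xmono_X (c : 'I_m -> nat) i : xmono c (xidx i) = c i.
Proof.
rewrite mnmE xidxE leq_addr addKn.
by case: insubP => [j _ /val_inj -> //|]; rewrite ltn_ord.
Qed.

Lemma xmono_W (c : 'I_m -> nat) : xmono c (widx m) = 0%N.
Proof. by rewrite mnmE widxE leq_addr addKn; case: insubP => [j /=|//]; lia. Qed.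

Lemma wmono_T k i : wmono k (tidx i) = 0%N.
Proof.
rewrite mulmnE mnm1E; case: eqP => [/(congr1 val)|]; last by rewrite mul0n.
by rewrite /= widxE tidxE; have := ltn_ord i; lia.
Qed.

Lemma wmono_X k i : wmono k (xidx i) = 0%N.
Proof.
rewrite mulmnE mnm1E; case: eqP => [/(congr1 val)|]; last by rewrite mul0n.
by rewrite /= widxE xidxE; have := ltn_ord i; lia.
Qed.

Lemma wmono_W k : wmono k (widx m) = k.
Proof. by rewrite mulmnE mnm1E eqxx mul1n. Qed.

Definition coordE :=
  (@mnmDE n, tmono_T, tmono_X, tmono_W, xmono_T, xmono_X, xmono_W,
   wmono_T, wmono_X, wmono_W).

Lemma xw_W : xw m m = wmono 1.
Proof. by rewrite /wmono mulm1n. Qed.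

Lemma xw_X l : xw m l = xmono (evec l).
Proof.
apply: mnm_TXW_eq => [i|i|]; rewrite mnm1E -[inord _]/(xidx l) !coordE ?ffunE.
- by apply/eqP; rewrite eqb0 -val_eqE /= tidxE xidxE; have := ltn_ord i; lia.
- by rewrite -val_eqE /= !xidxE eqn_add2l eq_sym.
- by apply/eqP; rewrite eqb0 -val_eqE /= widxE xidxE; have := ltn_ord l; lia.
Qed.

Lemma lepm_TW (e : 'I_m -> nat) k M :
  (forall i, e i <= M (tidx i))%N -> (k <= M (widx m))%N ->
  (Defs.tmono e + wmono k <= M)%MM.
Proof. by move=> hT hW; apply: lepm_TXW => [i|i|]; rewrite !coordE ?add0n ?addn0. Qed.

Lemma tpart_le N : (tpart N <= N)%MM.
Proof. by apply: lepm_TXW => [i|i|]; rewrite !coordE. Qed.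

Lemma lepm_tpart (u N L : 'X_{1..n}) :
  (forall i, u (xidx i) = 0%N) -> (forall i, L (xidx i) = 0%N) ->
  (L (widx m) <= u (widx m))%N -> (L <= u + N)%MM -> (L <= tpart N + u)%MM.
Proof.
move=> huX hLX hLW /mnm_lepP hL; apply: lepm_TXW => [i|i|]; rewrite !coordE ?hLX //.
by have := hL (tidx i); rewrite mnmDE addnC.
Qed.

Lemma inR_tmono (K : fieldType) (e : 'I_m -> nat) : inR ('X_[Defs.tmono e] : {mpoly K[n]}).
Proof.
move=> M; rewrite msuppX inE => /eqP -> k hk.
case: (idx_cases k) => [[i hki]|[i ->]|->]; rewrite ?coordE //.
by move: hk; rewrite hki tidxE leqNgt ltn_ord.
Qed.

Lemma cabs_eq1 (c : {ffun 'I_m -> nat}) : cabs c = 1%N -> exists l, c = evec l.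
Proof.
move=> hc; have [l hl|h0] := pickP (fun i => 0 < c i)%N; last first.
  move: hc; rewrite /cabs big1 // => i _.
  by move/negbT: (h0 i); rewrite -eqn0Ngt => /eqP.
exists l; apply/ffunP => i; rewrite ffunE; move: hc hl; rewrite /cabs (bigD1 l) //=.
have [-> /=|hil] := eqVneq i l; first by lia.
by rewrite (bigD1 i) //=; lia.
Qed.

Lemma cabs_evec l : cabs (evec l) = 1%N.
Proof.
by rewrite /cabs (bigD1 l) //= ffunE eqxx big1 // => i /negbTE; rewrite ffunE => ->.
Qed.

End Coordinates.

Lemma lexlt_irr (s : seq nat) : lexlt s s = false.
Proof. by elim: s => //= x s ->; rewrite ltnn eqxx. Qed.

Lemma lexlt_trans (s1 s2 s3 : seq nat) : lexlt s1 s2 -> lexlt s2 s3 -> lexlt s1 s3.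
Proof.
elim: s1 s2 s3 => [|x s1 IH] [|y s2] [|z s3] //=.
case/orP => [h1|/andP[/eqP <- h1]]; case/orP => [h2|/andP[/eqP <- h2]].
- by rewrite (ltn_trans h1 h2).
- by rewrite h1.
- by rewrite h2.
- by rewrite (IH _ _ h1 h2) eqxx orbT.
Qed.

Lemma lexlt_total (s1 s2 : seq nat) :
  size s1 = size s2 -> s1 != s2 -> lexlt s1 s2 || lexlt s2 s1.
Proof.
elim: s1 s2 => [|x s1 IH] [|y s2] //= [hs] hne.
case: (ltngtP x y) => //= hxy; subst y.
by apply: IH => //; apply: contra hne => /eqP ->.
Qed.

Lemma lexlt_zeros (s t : seq nat) : all (pred1 0%N) t -> lexlt s t = false.
Proof. by elim: s t => [|x s IH] [|y t] //= /andP[/eqP -> /IH ->]; rewrite andbF. Qed.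

Section LexOrder.
Variable m : nat.
Implicit Types (M N P : 'X_{1..nS m}).

Lemma mem_ord_list (k : 'I_(nS m)) : k \in ord_list m.
Proof.
apply/mapP; exists (nat_of_ord k); last by rewrite inord_val.
have hk : (k < (m + m).+1)%N by [].
rewrite inE mem_cat mem_rev !mem_iota add0n leq0n /=.
case: (ltnP k m) => h1; first by rewrite !orbT.
case: (ltnP k (m + m)) => h2 /=; first by rewrite ?orbT ?andbT.
by apply/orP; left; apply/eqP; lia.
Qed.

Lemma lexkey_inj : injective (@lexkey m).
Proof.
move=> M N hMN; apply/mnmP => k; move: hMN (mem_ord_list k); rewrite /lexkey.
elim: (ord_list m) => //= x s IH [hx hs].
by rewrite inE => /orP[/eqP ->|/IH]; [|apply].
Qed.

Lemma mlt_irr M : mlt_tau M M = false.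
Proof. exact: lexlt_irr. Qed.

Lemma mlt_trans N M P : mlt_tau M N -> mlt_tau N P -> mlt_tau M P.
Proof. exact: lexlt_trans. Qed.

Lemma mlt_total M N : M != N -> mlt_tau M N || mlt_tau N M.
Proof.
move=> hMN; apply: lexlt_total; first by rewrite !size_map.
by apply: contra hMN => /eqP /lexkey_inj ->.
Qed.

Lemma mlt_0 M : mlt_tau M 0%MM = false.
Proof.
by apply: lexlt_zeros; rewrite all_map; apply/allP => k _; rewrite /= mnm0E.
Qed.

Lemma mlt_W M N : (M (widx m) < N (widx m))%N -> mlt_tau M N.
Proof. by rewrite /mlt_tau /lexkey /= => ->. Qed.

End LexOrder.

Section LeadingMonomial.
Variables (K : fieldType) (m : nat).
Implicit Types (g : {mpoly K[nS m]}) (A B M N : 'X_{1..nS m}).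

Lemma lm_max g N : N \in msupp g -> ~~ mlt_tau (lm g) N.
Proof.
rewrite /lm; elim: (msupp g) => //= x s IH; rewrite inE => /orP[/eqP hx|hN].
  by subst x; case: ifP => h; rewrite ?mlt_irr ?h.
case: ifP => h; last exact: IH hN.
by apply: contra (IH hN) => hxN; apply: mlt_trans h hxN.
Qed.

Lemma lm_supp g : g != 0 -> lm g \in msupp g.
Proof.
rewrite -msupp_eq0 /lm; elim: (msupp g) => //= x s IH _.
case: ifP => h; first by rewrite mem_head.
case: s IH h => [|y s] IH h /=.
  rewrite inE; apply/eqP; case: (eqVneq x 0%MM) => // hx.
  by have := mlt_total hx; rewrite h mlt_0.
by rewrite inE IH // orbT.
Qed.

Lemma mcoeff_binomial A B N :
  ('X_[A] - 'X_[B] : {mpoly K[nS m]})@_N = (A == N)%:R - (B == N)%:R.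
Proof. by rewrite mcoeffB !mcoeffX. Qed.

Lemma msupp_binomial A B N :
  N \in msupp ('X_[A] - 'X_[B] : {mpoly K[nS m]}) -> N = A \/ N = B.
Proof.
rewrite mcoeff_msupp mcoeff_binomial.
have [->|_] := eqVneq A N; first by left.
by have [->|_] := eqVneq B N; [right|rewrite subrr eqxx].
Qed.

Lemma binomial_msuppl A B :
  A != B -> A \in msupp ('X_[A] - 'X_[B] : {mpoly K[nS m]}).
Proof.
rewrite eq_sym => hBA.
by rewrite mcoeff_msupp mcoeff_binomial eqxx (negbTE hBA) subr0 oner_neq0.
Qed.

Lemma binomial_msuppr A B :
  A != B -> B \in msupp ('X_[A] - 'X_[B] : {mpoly K[nS m]}).
Proof.
move=> hAB.
by rewrite mcoeff_msupp mcoeff_binomial eqxx (negbTE hAB) sub0r oppr_eq0 oner_neq0.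
Qed.

Lemma binomial_neq0 A B : A != B -> ('X_[A] - 'X_[B] : {mpoly K[nS m]}) != 0.
Proof. by move/binomial_msuppl; apply: contraTneq => ->; rewrite msupp0. Qed.

Lemma lm_binomial A B :
  mlt_tau B A -> lm ('X_[A] - 'X_[B] : {mpoly K[nS m]}) = A.
Proof.
move=> hBA; have hAB : A != B by apply: contraTneq hBA => ->; rewrite mlt_irr.
have [//|hB] := msupp_binomial (lm_supp (binomial_neq0 hAB)).
by have := lm_max (binomial_msuppl hAB); rewrite hB hBA.
Qed.

Lemma lm_binomialr A B :
  mlt_tau A B -> lm ('X_[A] - 'X_[B] : {mpoly K[nS m]}) = B.
Proof.
move=> hAB; have hAB' : A != B by apply: contraTneq hAB => ->; rewrite mlt_irr.
have [hA|//] := msupp_binomial (lm_supp (binomial_neq0 hAB')).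
by have := lm_max (binomial_msuppr hAB'); rewrite hA hAB.
Qed.

End LeadingMonomial.

Section BinomialGenerators.
Variables (m : nat) (a b : 'I_m -> nat).
Implicit Types (M N : 'X_{1..nS m}) (c : {ffun 'I_m -> nat}) (i l : 'I_m).
Local Notation psi := (psiT a b).

Definition zdeg M : nat := (\sum_(i < m) M (xidx i) + M (widx m))%N.

Definition Pterm M N : 'X_{1..nS m} :=
  (Defs.tmono (fun i => psi N i - minn (psi M i) (psi N i))%N + M)%MM.

Definition gam c i : nat := (a i * c i - b i * cabs c)%N.

Lemma psiTD M N i : psi (M + N)%MM i = (psi M i + psi N i)%N.
Proof. by rewrite /psiT !mnmDE; lia. Qed.

Lemma zdegD M N : zdeg (M + N)%MM = (zdeg M + zdeg N)%N.
Proof.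
rewrite /zdeg mnmDE; under eq_bigr do rewrite mnmDE.
by rewrite big_split /=; lia.
Qed.

Lemma zdeg_xmono c : zdeg (xmono c) = cabs c.
Proof. by rewrite /zdeg !coordE addn0; apply: eq_bigr => i _; rewrite !coordE. Qed.

Lemma zdeg_wmono k : zdeg (wmono m k) = k.
Proof. by rewrite /zdeg !coordE big1 // => i _; rewrite !coordE. Qed.

Lemma PpolE K M N : Ppol K a b M N = 'X_[Pterm M N] - 'X_[Pterm N M].
Proof.
rewrite /Ppol /Pterm /=; congr (_ - 'X_[_]); congr (_ + _)%MM.
by apply/mnmP => k; rewrite !mnmE; case: insub => //= i; rewrite minnC.
Qed.

Lemma Pterm_T M N i :
  Pterm M N (tidx i) = (psi N i - minn (psi M i) (psi N i) + M (tidx i))%N.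
Proof. by rewrite /Pterm !coordE. Qed.

Lemma Pterm_X M N i : Pterm M N (xidx i) = M (xidx i).
Proof. by rewrite /Pterm !coordE. Qed.

Lemma Pterm_W M N : Pterm M N (widx m) = M (widx m).
Proof. by rewrite /Pterm !coordE. Qed.

Lemma psiT_Pterm M N i : psi (Pterm M N) i = maxn (psi M i) (psi N i).
Proof. by rewrite [LHS]/psiT Pterm_T Pterm_X Pterm_W /psiT; lia. Qed.

Lemma psiT_PtermC M N i : psi (Pterm M N) i = psi (Pterm N M) i.
Proof. by rewrite !psiT_Pterm maxnC. Qed.

Lemma zdeg_Pterm M N : zdeg (Pterm M N) = zdeg M.
Proof. by rewrite /zdeg Pterm_W; under eq_bigr do rewrite Pterm_X. Qed.

Lemma Pterm_Pc c :
  Pterm (wmono m (cabs c)) (xmono c) = (Defs.tmono (gam c) + wmono m (cabs c))%MM.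
Proof.
apply: mnm_TXW_eq => [i|i|]; rewrite ?Pterm_T ?Pterm_X ?Pterm_W !coordE //.
by rewrite /psiT !coordE /gam; lia.
Qed.

Lemma Pc_evec K l : Pc K a b (evec l) = Ppol K a b (xw m m) (xw m l).
Proof. by rewrite /Pc cabs_evec xw_W xw_X. Qed.

Lemma Pterm_xw_T i l : i != l -> Pterm (xw m i) (xw m l) (tidx l) = a l.
Proof.
move=> hil; rewrite !xw_X Pterm_T /psiT !coordE !ffunE eqxx eq_sym (negbTE hil).
by lia.
Qed.

End BinomialGenerators.

Section CoefficientSum.
Variables (K : fieldType) (n : nat) (s : seq 'X_{1..n}).
Hypothesis s_uniq : uniq s.
Implicit Types (p g : {mpoly K[n]}) (A B : 'X_{1..n}).

Definition coef_sum g : K := \sum_(N <- s) g@_N.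

Lemma coef_sumB g1 g2 : coef_sum (g1 - g2) = coef_sum g1 - coef_sum g2.
Proof. by rewrite /coef_sum -sumrB; apply: eq_bigr => N _; rewrite mcoeffB. Qed.

Lemma coef_sum_sum (I : Type) (r : seq I) (F : I -> {mpoly K[n]}) :
  coef_sum (\sum_(x <- r) F x) = \sum_(x <- r) coef_sum (F x).
Proof. by rewrite /coef_sum exchange_big /=; apply: eq_bigr => N _; rewrite raddf_sum. Qed.

Lemma coef_sumX A : coef_sum 'X_[A] = (A \in s)%:R.
Proof.
rewrite /coef_sum; have [hA|hA] := boolP (A \in s).
  rewrite (bigD1_seq A) //= mcoeffX eqxx big1 ?addr0 // => N /negbTE.
  by rewrite mcoeffX eq_sym => ->.
by rewrite big1_seq // => N /andP[_ hN]; rewrite mcoeffX; case: eqP hN hA => // -> ->.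
Qed.

Lemma coef_sumMX p A :
  coef_sum (p * 'X_[A]) = \sum_(t <- msupp p) p@_t * ((t + A)%MM \in s)%:R.
Proof.
rewrite {1}(mpolyE p) mulr_suml coef_sum_sum; apply: eq_bigr => t _.
rewrite -scalerAl -mpolyXD -coef_sumX /coef_sum mulr_sumr.
by apply: eq_bigr => N _; rewrite mcoeffZ.
Qed.

Lemma coef_sum_binomial p A B :
  (forall t, ((t + A)%MM \in s) = ((t + B)%MM \in s)) ->
  coef_sum (p * ('X_[A] - 'X_[B])) = 0.
Proof.
move=> hAB; rewrite mulrBr coef_sumB !coef_sumMX.
by apply/eqP; rewrite subr_eq0; apply/eqP; apply: eq_bigr => t _; rewrite hAB.
Qed.

End CoefficientSum.

Lemma coef_sum_lm (K : fieldType) m (s : seq 'X_{1..nS m}) (g : {mpoly K[nS m]}) :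
  uniq s -> lm g \in s -> (forall N, N \in s -> N != lm g -> mlt_tau (lm g) N) ->
  coef_sum s g = g@_(lm g).
Proof.
move=> s_uniq hlm hup; rewrite /coef_sum (bigD1_seq (lm g)) //= big1_seq ?addr0 //.
move=> N /andP[hNlm hN].
apply/eqP; rewrite -[_ == 0]negbK -mcoeff_msupp.
exact: contraL (@lm_max _ _ g N) (hup N hN hNlm).
Qed.

Lemma bounded_mnm_enum n (P : pred 'X_{1..n}) B :
  (forall N, P N -> forall i, N i <= B)%N -> exists2 s, uniq s & s =i P.
Proof.
move=> hB; exists [seq val N | N <- enum (fun N : 'X_{1..n < (n * B).+1} => P N)].
  by rewrite map_inj_uniq ?enum_uniq //; apply: val_inj.
move=> N; apply/mapP/idP => [[N' hN' ->]|hN]; first by rewrite mem_enum in hN'.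
have hdeg : (mdeg N < (n * B).+1)%N.
  rewrite ltnS mdegE -[n in (_ <= n * B)%N]card_ord -sum_nat_const.
  by apply: leq_sum => i _; apply: hB.
by exists (BMultinom hdeg); rewrite ?mem_enum.
Qed.

Section Ideals.
Variables (K : fieldType) (m : nat).
Local Notation n := (nS m).
Implicit Types (G H I : {mpoly K[n]} -> Prop) (f g p : {mpoly K[n]}).

Lemma ideal_genD G f1 f2 : ideal_gen G f1 -> ideal_gen G f2 -> ideal_gen G (f1 + f2).
Proof.
move=> [s1 [h1 ->]] [s2 [h2 ->]]; exists (s1 ++ s2); split; last by rewrite big_cat.
by move=> q; rewrite mem_cat => /orP[/h1|/h2].
Qed.

Lemma ideal_genMl G p f : ideal_gen G f -> ideal_gen G (p * f).
Proof.
move=> [s [h ->]]; exists [seq (p * q.1, q.2) | q <- s]; split.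
  by move=> q /mapP [q' hq' ->]; exact: (h q' hq').
by rewrite big_map mulr_sumr; apply: eq_bigr => q _; rewrite mulrA.
Qed.

Lemma ideal_gen_multiple G p f : G f -> ideal_gen G (p * f).
Proof.
by move=> hf; exists [:: (p, f)]; rewrite big_seq1; split => // q; rewrite inE => /eqP ->.
Qed.

Lemma ideal_gen_self G f : G f -> ideal_gen G f.
Proof. by move=> hf; rewrite -[f]mul1r; apply: ideal_gen_multiple. Qed.

Lemma ideal_gen_sum G (T : eqType) (r : seq T) (F : T -> {mpoly K[n]}) :
  (forall x, x \in r -> ideal_gen G (F x)) -> ideal_gen G (\sum_(x <- r) F x).
Proof.
elim: r => [|x r IH] hr; first by exists [::]; rewrite !big_nil.
rewrite big_cons; apply: ideal_genD; first by apply: hr; rewrite mem_head.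
by apply: IH => y hy; apply: hr; rewrite inE hy orbT.
Qed.

Lemma ideal_gen_colon G H g f :
  ideal_gen (fun h => ideal_gen G (h * g) /\ H h) f -> ideal_gen G (f * g).
Proof.
move=> [s [hs ->]]; rewrite big_distrl /=; apply: ideal_gen_sum => q hq.
by rewrite -mulrA; apply: ideal_genMl; case: (hs q hq).
Qed.

Lemma ideal_gen_msupp G (phi : 'X_{1..n} -> 'X_{1..n}) f :
  (forall N, N \in msupp f -> (phi N <= N)%MM /\ G 'X_[phi N]) -> ideal_gen G f.
Proof.
move=> hphi; rewrite (mpolyE f); apply: ideal_gen_sum => N /hphi [hle hG].
have -> : f@_N *: 'X_[N] = f@_N *: 'X_[N - phi N] * 'X_[phi N].
  by rewrite -scalerAl -mpolyXD submK.
exact: ideal_gen_multiple.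
Qed.

Lemma init_ideal_msupp I F N :
  init_ideal I F -> N \in msupp F -> exists g, [/\ I g, g != 0 & (lm g <= N)%MM].
Proof.
move=> [s [hs ->]] /msupp_sum_le /flattenP [l /mapP [q]].
rewrite filter_predT => /hs [g [hg [hg0 ->]]] -> hN; exists g; split => //.
by move: hN; rewrite (perm_mem (msuppMX _ _)) => /mapP [t _ ->]; apply: lem_addr.
Qed.

Lemma init_idealX I g N : I g -> g != 0 -> (lm g <= N)%MM -> init_ideal I 'X_[N].
Proof.
move=> hg hg0 hle; rewrite -(submK hle) mpolyXD; apply: ideal_gen_multiple.
by exists g.
Qed.

Lemma coef_sum_ideal (s : seq 'X_{1..n}) G f : uniq s ->
  (forall h, G h -> exists A B, h = 'X_[A] - 'X_[B] /\
     forall t, ((t + A)%MM \in s) = ((t + B)%MM \in s)) ->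
  ideal_gen G f -> coef_sum s f = 0.
Proof.
move=> s_uniq hG [r [hr ->]]; rewrite coef_sum_sum big1_seq // => q.
by move=> /hr /hG [A [B [-> hAB]]]; exact: coef_sum_binomial.
Qed.

End Ideals.

Lemma leq_sum_eq (I : finType) (F G : I -> nat) :
  (forall i, F i <= G i)%N -> (\sum_i F i = \sum_i G i)%N -> F =1 G.
Proof.
move=> hle hs i; apply/eqP; rewrite eqn_leq hle /= leqNgt; apply/negP => hlt.
move: hs; rewrite (bigD1 i) // [RHS](bigD1 i) //=.
have : (\sum_(j | j != i) F j <= \sum_(j | j != i) G j)%N by apply: leq_sum.
lia.
Qed.

Lemma exists_ffun_le_sum m (q : 'I_m -> nat) r :
  (r <= \sum_(i < m) q i)%N ->
  exists c : {ffun 'I_m -> nat}, (forall i, c i <= q i)%N /\ cabs c = r.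
Proof.
elim: r => [|r IH] hr.
  by exists [ffun=> 0%N]; split => [i|]; rewrite /cabs ?big1 // => *; rewrite ffunE.
have [c [hc hcr]] := IH (ltnW hr).
have [i hi|hnone] := pickP (fun i => c i < q i)%N; last first.
  have : (\sum_(i < m) q i <= cabs c)%N.
    by apply: leq_sum => i _; move/negbT: (hnone i); rewrite -leqNgt.
  by rewrite hcr; lia.
exists [ffun j => (c j + (j == i))%N]; split => [j|].
  by rewrite ffunE; case: eqP => [->|_]; rewrite ?addn1 ?addn0.
rewrite /cabs; under eq_bigr do rewrite ffunE.
rewrite big_split /= -/(cabs c) hcr (bigD1 i) //= eqxx big1 ?addn0 ?addn1 //.
by move=> j /negbTE ->.
Qed.

Section Fiber.
Variables (m : nat) (a b : 'I_m -> nat) (M : 'X_{1..nS m}).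
Local Notation psi := (psiT a b).
Local Notation W := (widx m).
Implicit Types (N : 'X_{1..nS m}) (c : {ffun 'I_m -> nat}).

Lemma fiber_gap N :
  (forall i, psi N i = psi M i) -> zdeg N = zdeg M -> (N W <= M W)%N -> N != M ->
  (maxn (M W - N W) 1 <= \sum_(i < m) (N (xidx i) - M (xidx i)))%N.
Proof.
move=> hpsi hz hW hNM; rewrite /zdeg in hz.
set SN := (\sum_(i < m) N (xidx i))%N in hz *.
set SM := (\sum_(i < m) M (xidx i))%N in hz *.
have hr : (M W - N W <= \sum_(i < m) (N (xidx i) - M (xidx i)))%N.
  have : (SN <= \sum_(i < m) ((N (xidx i) - M (xidx i)) + M (xidx i)))%N.
    by apply: leq_sum => i _; rewrite addnC -leq_subLR.
  by rewrite big_split /= -/SM; lia.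
suff : (0 < \sum_(i < m) (N (xidx i) - M (xidx i)))%N by lia.
rewrite lt0n; apply: contra hNM; rewrite sum_nat_eq0 => /forallP hX0.
have hXle i : (N (xidx i) <= M (xidx i))%N by rewrite -subn_eq0; apply: hX0.
have hXs : SN = SM.
  have : (SN <= SM)%N by apply: leq_sum => i _; apply: hXle.
  lia.
have hX := leq_sum_eq hXle hXs.
have hWe : N W = M W by lia.
apply/eqP; apply: mnm_TXW_eq => // i.
by have := hpsi i; rewrite /psiT hX hWe; lia.
Qed.

Lemma gam_le_gap N c :
  (forall i, psi N i = psi M i) -> (N W <= M W)%N -> (M W - N W <= cabs c)%N ->
  (forall i, c i <= N (xidx i) - M (xidx i))%N -> forall i, (gam a b c i <= M (tidx i))%N.
Proof.
move=> hpsi hW hc hcD i; have := hpsi i; rewrite /psiT /gam => hpsi_i.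
have h1 : (a i * c i <= a i * N (xidx i) - a i * M (xidx i))%N.
  by rewrite -mulnBr leq_mul2l hcD orbT.
have h2 : (b i * M W - b i * N W <= b i * cabs c)%N.
  by rewrite -mulnBr leq_mul2l hc orbT.
have h3 : (b i * N W <= b i * M W)%N by rewrite leq_mul2l hW orbT.
lia.
Qed.

Definition fiber : pred 'X_{1..nS m} := fun N =>
  [&& [forall i, psi N i == psi M i], zdeg N == zdeg M & (M W < N W)%N || (N == M)].

Lemma fiber_self : fiber M.
Proof. by apply/and3P; split; [apply/forallP => i|rewrite eqxx|rewrite eqxx orbT]. Qed.

Lemma fiber_bounded N : fiber N -> forall k, (N k <= zdeg M + \sum_(i < m) psi M i)%N.
Proof.
case/and3P => /forallP hpsi /eqP hz _ k; rewrite -hz.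
have hX i : (N (xidx i) <= zdeg N)%N by rewrite /zdeg (bigD1 i) //=; lia.
have hT i : (N (tidx i) <= \sum_(j < m) psi M j)%N.
  by rewrite (bigD1 i) //= -(eqP (hpsi i)) /psiT; lia.
case: (idx_cases k) => [[i ->]|[i ->]|->]; [have := hT i|have := hX i|rewrite /zdeg]; lia.
Qed.

End Fiber.

Section FiberMoves.
Variables (m : nat) (a b : 'I_m -> nat) (M : 'X_{1..nS m}) (k : nat).
Local Notation psi := (psiT a b).
Local Notation W := (widx m).
Implicit Types (N A B t : 'X_{1..nS m}) (c : {ffun 'I_m -> nat}).

Hypothesis k_gt1 : (1 < k)%N.
Hypothesis MW_gt0 : (0 < M W)%N.
Hypothesis gam_not_le : forall c,
  (0 < cabs c < k)%N -> (cabs c <= M W)%N -> exists i, (M (tidx i) < gam a b c i)%N.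

Lemma fiber_band N :
  (forall i, psi N i = psi M i) -> zdeg N = zdeg M -> (N W <= M W < N W + k)%N -> N = M.
Proof.
move=> hpsi hz /andP[hle hlt]; apply/eqP; apply/negPn/negP => hNM.
(* Take |c| = max(M W - N W, 1) units of the X-excess of N over M: then
   in(P(W^|c|, X^c)) would divide M. *)
have [c [hcD hcs]] := exists_ffun_le_sum (fiber_gap hpsi hz hle hNM).
have [i hi] : exists i, (M (tidx i) < gam a b c i)%N.
  by apply: gam_not_le; rewrite hcs; lia.
have : (gam a b c i <= M (tidx i))%N.
  by apply: (gam_le_gap hpsi hle _ hcD); rewrite hcs; lia.
by rewrite leqNgt hi.
Qed.

Lemma fiber_move A B t :
  (forall i, psi A i = psi B i) -> zdeg A = zdeg B -> (A W <= B W + k)%N ->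
  ((B W < A W)%N -> ~~ (A <= M)%MM) -> fiber a b M (t + A)%MM -> fiber a b M (t + B)%MM.
Proof.
move=> hpsi hz hAB hdiv /and3P[/forallP hpA /eqP hzA hWA].
have hpB i : psi (t + B)%MM i = psi M i by rewrite psiTD -hpsi -psiTD (eqP (hpA i)).
have hzB : zdeg (t + B)%MM = zdeg M by rewrite zdegD -hz -zdegD.
apply/and3P; split; [by apply/forallP => i; rewrite hpB|by rewrite hzB|].
apply/orP; case: (ltnP (M W) ((t + B)%MM W)) => hBM; [by left|right].
apply/eqP; apply: fiber_band => //; rewrite hBM /=.
case/orP: hWA => [|/eqP htA]; first by rewrite !mnmDE; lia.
have hBA : ~~ (B W < A W)%N by apply/negP => /hdiv; rewrite -htA lem_addl.
by move: hBM hBA; rewrite -htA !mnmDE; lia.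
Qed.

Lemma fiber_Ppol_moveE K M' N' :
  zdeg M' = zdeg N' -> (M' W <= N' W + k)%N -> (N' W <= M' W + k)%N ->
  ~~ (lm (Ppol K a b M' N') <= M)%MM ->
  forall t, fiber a b M (t + Pterm a b M' N')%MM = fiber a b M (t + Pterm a b N' M')%MM.
Proof.
move=> hz hMN hNM hdiv t.
have hpsi i : psi (Pterm a b M' N') i = psi (Pterm a b N' M') i by apply: psiT_PtermC.
have hz' : zdeg (Pterm a b M' N') = zdeg (Pterm a b N' M') by rewrite !zdeg_Pterm.
rewrite PpolE in hdiv; apply/idP/idP.
  apply: (fiber_move hpsi hz'); first by rewrite !Pterm_W.
  by move/mlt_W/lm_binomial => hlm; rewrite hlm in hdiv.
apply: (fiber_move (fun i => esym (hpsi i)) (esym hz')); first by rewrite !Pterm_W.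
by move/mlt_W/lm_binomialr => hlm; rewrite hlm in hdiv.
Qed.

Lemma fiber_ideal_eq0 (K : fieldType) (G : {mpoly K[nS m]} -> Prop) g :
  (forall h, G h -> ~~ (lm h <= M)%MM /\ exists M' N', [/\ h = Ppol K a b M' N',
     zdeg M' = zdeg N', (M' W <= N' W + k)%N & (N' W <= M' W + k)%N]) ->
  ideal_gen G g -> lm g = M -> g = 0.
Proof.
move=> hG hg hlm; have [s s_uniq hs] := bounded_mnm_enum (@fiber_bounded m a b M).
have hsum0 : coef_sum s g = 0.
  apply: (coef_sum_ideal s_uniq _ hg) => h /hG [hdiv [M' [N' [hh hz h1 h2]]]]; subst h.
  exists (Pterm a b M' N'), (Pterm a b N' M'); split; first exact: PpolE.
  by move=> t; rewrite !hs; apply: (fiber_Ppol_moveE (K := K)).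
have hsumM : coef_sum s g = g@_M.
  rewrite -hlm; apply: coef_sum_lm => //; rewrite hlm ?hs; first exact: fiber_self.
  by move=> N; rewrite hs => /and3P[_ _ /orP[/mlt_W //|->]].
apply/eqP; apply: contraT => hg0; have := lm_supp hg0.
by rewrite mcoeff_msupp hlm -hsumM hsum0 eqxx.
Qed.

End FiberMoves.

Section PcLeading.
Variables (K : fieldType) (m : nat) (a b : 'I_m -> nat).
Implicit Types (c : {ffun 'I_m -> nat}).

Lemma lm_Pc c : (0 < cabs c)%N ->
  lm (Pc K a b c) = (Defs.tmono (gam a b c) + wmono m (cabs c))%MM.
Proof.
move=> hc; rewrite /Pc PpolE -/(wmono m (cabs c)) -Pterm_Pc.
by apply: lm_binomial; apply: mlt_W; rewrite !Pterm_W !coordE.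
Qed.

Lemma Pc_neq0 c : (0 < cabs c)%N -> Pc K a b c != 0.
Proof.
move=> hc; rewrite /Pc PpolE -/(wmono m (cabs c)); apply: binomial_neq0; apply/eqP.
move/(congr1 (fun M : 'X_{1..nS m} => M (widx m))); rewrite !Pterm_W !coordE.
by move=> hc0; rewrite hc0 in hc.
Qed.

Lemma lm_Pc_evec_le l (L : 'X_{1..nS m}) :
  (a l <= L (tidx l))%N -> (0 < L (widx m))%N -> (lm (Pc K a b (evec l)) <= L)%MM.
Proof.
move=> hl hW; rewrite lm_Pc cabs_evec //; apply: lepm_TW => // i.
rewrite /gam ffunE; case: eqP => [->|_] /=; lia.
Qed.

End PcLeading.

Section GroebnerHj.
Variables (K : fieldType) (m : nat) (a b : 'I_m -> nat) (C : seq {ffun 'I_m -> nat}) (j k : nat).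
Local Notation W := (widx m).
Local Notation c_ i := (nth [ffun=> 0%N] C i).
Implicit Types (c : {ffun 'I_m -> nat}) (g h : {mpoly K[nS m]}).

Definition Hgen h : Prop := Gamma0 a b h \/ exists i, (i < j)%N /\ h = Pc K a b (c_ i).

Hypothesis j_le_size : (j <= size C)%N.
Hypothesis C_ge2 : forall c, c \in C -> (2 <= cabs c)%N.
Hypothesis C_le_k : forall i, (i < j)%N -> (cabs (c_ i) <= k)%N.
Hypothesis C_closed : forall c, (2 <= cabs c < k)%N -> exists2 i, (i < j)%N & c = c_ i.
Hypothesis k_gt1 : (1 < k)%N.
Hypothesis C_groebner :
  groebner (fun f => Gamma0 a b f \/ exists2 c, c \in C & f = Pc K a b c) (reesL a b).

Lemma Hgen_Pc c : (0 < cabs c < k)%N -> Hgen (Pc K a b c).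
Proof.
case/andP=> hc0 hck; have [hc1|hc2] := eqVneq (cabs c) 1%N.
  have [l ->] := cabs_eq1 hc1; left; exists m, l.
  by split; [rewrite ltn_ord leqnn|exact: Pc_evec].
have [|i hi ->] := @C_closed c; first by rewrite hck andbT; lia.
by right; exists i.
Qed.

Lemma Hgen_cases h : Hgen h ->
  (exists2 c, (0 < cabs c <= k)%N & h = Pc K a b c) \/
  (exists i l : 'I_m, i != l /\ h = Ppol K a b (xw m i) (xw m l)).
Proof.
case=> [[i [l [/andP[hli him] ->]]]|[i [hi ->]]]; last first.
  left; exists (c_ i) => //; rewrite C_le_k // andbT.
  exact: ltnW (C_ge2 (mem_nth _ (leq_trans hi j_le_size))).
have hl : (l < m)%N by lia.
have [him'|hi] := eqVneq i m.
  left; exists (evec (Ordinal hl)); first by rewrite cabs_evec; lia.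
  by rewrite Pc_evec him'.
have hi' : (i < m)%N by lia.
right; exists (Ordinal hi'), (Ordinal hl); split => //.
by rewrite -val_eqE /=; lia.
Qed.

Lemma Hgen_Ppol h : Hgen h -> exists M' N', [/\ h = Ppol K a b M' N', zdeg M' = zdeg N',
  (M' W <= N' W + k)%N & (N' W <= M' W + k)%N].
Proof.
case/Hgen_cases => [[c /andP[_ hck] ->]|[i [l [_ ->]]]].
  exists (wmono m (cabs c)), (xmono c).
  by rewrite zdeg_wmono zdeg_xmono !coordE; split => //; lia.
exists (xw m i), (xw m l).
by rewrite !xw_X !zdeg_xmono !cabs_evec !coordE.
Qed.

Lemma Hj_reesL g : Hj a b C j g -> reesL a b g.
Proof.
case=> s [hs ->]; rewrite /reesL rmorph_sum big1_seq // => q /andP[_ /hs hq].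
suff hq2 : reesL a b q.2.
  by rewrite rmorphM; apply/eqP; rewrite mulf_eq0; apply/orP; right; apply/eqP.
apply: C_groebner.1; case: hq => [|[i [hi ->]]]; first by left.
by right; exists (c_ i) => //; apply: mem_nth; apply: leq_trans hi j_le_size.
Qed.

Lemma Hj_lm_W0 g : Hj a b C j g -> g != 0 -> lm g W = 0%N ->
  exists2 h, Hgen h & (lm h <= lm g)%MM.
Proof.
move=> hg hg0 hW.
have hinit := init_idealX (Hj_reesL hg) hg0 (lepm_refl (lm g)).
have hlm : lm g \in msupp ('X_[lm g] : {mpoly K[nS m]}) by rewrite msuppX mem_head.
have [g' [hg' hg'0 hle]] := init_ideal_msupp ((C_groebner.2 _).1 hinit) hlm.
case: hg' => [hG0|[c hc hg'c]]; first by exists g'; first left.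
move/mnm_lepP: hle => /(_ W); rewrite hg'c lm_Pc ?coordE ?hW; last exact: ltnW (C_ge2 hc).
by have := C_ge2 hc; lia.
Qed.

Lemma Hj_lm_gen g : Hj a b C j g -> g != 0 -> exists2 h, Hgen h & (lm h <= lm g)%MM.
Proof.
move=> hg hg0; apply: NNPP => hno.
have hdiv h : Hgen h -> ~~ (lm h <= lm g)%MM.
  by move=> hh; apply/negP => hle; apply: hno; exists h.
have [hW0|hW] := posnP (lm g W); first exact: hno (Hj_lm_W0 hg hg0 hW0).
move/eqP: hg0; apply.
apply: (fiber_ideal_eq0 (a := a) (b := b) k_gt1 hW _ _ hg erefl) => [c hc hcW|h hh].
  have [i hi|hle] := pickP (fun i => lm g (tidx i) < gam a b c i)%N; first by exists i.
  case/negP: (hdiv _ (Hgen_Pc hc)); rewrite lm_Pc; last by case/andP: hc.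
  by apply: lepm_TW => // i; rewrite leqNgt hle.
by split; [exact: hdiv|exact: Hgen_Ppol].
Qed.

Lemma Hgen_tpart (u N : 'X_{1..nS m}) h :
  (forall i, u (xidx i) = 0%N) -> (k <= u W)%N -> Hgen h -> (lm h <= u + N)%MM ->
  exists h', [/\ Hgen h', h' != 0 & (lm h' <= tpart N + u)%MM].
Proof.
move=> huX hkW hh hle.
have to_tpart (L : 'X_{1..nS m}) : (forall i, L (xidx i) = 0%N) -> (L W <= k)%N ->
    (L <= u + N)%MM -> (L <= tpart N + u)%MM.
  by move=> hLX hLW; apply: lepm_tpart => //; apply: leq_trans hkW.
case: (Hgen_cases hh) => [[c /andP[hc0 hck] hc]|[i [l [hil hh']]]].
  exists h; split => //; first by rewrite hc Pc_neq0.
  by move: hle; rewrite hc lm_Pc //; apply: to_tpart => [i|]; rewrite !coordE.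
have [p hp] : exists p, (a p <= (u + N)%MM (tidx p))%N.
  have hAB : Pterm a b (xw m i) (xw m l) != Pterm a b (xw m l) (xw m i).
    apply/eqP => /(congr1 (fun M : 'X_{1..nS m} => M (xidx i))).
    by rewrite !Pterm_X !xw_X !coordE !ffunE eqxx (negbTE hil).
  move/mnm_lepP: hle; rewrite hh' PpolE.
  have [->|->] := msupp_binomial (lm_supp (binomial_neq0 K hAB)).
    by move/(_ (tidx l)); rewrite Pterm_xw_T //; exists l.
  by move/(_ (tidx i)); rewrite Pterm_xw_T 1?eq_sym //; exists i.
exists (Pc K a b (evec p)); split.
- by apply: Hgen_Pc; rewrite cabs_evec.
- by apply: Pc_neq0; rewrite cabs_evec.
apply: to_tpart => [q||]; last by apply: lm_Pc_evec_le => //; rewrite mnmDE; lia.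
  by rewrite lm_Pc ?cabs_evec // !coordE.
by rewrite lm_Pc ?cabs_evec // !coordE; lia.
Qed.

Lemma Hj_colon_extended (u : 'X_{1..nS m}) f :
  (forall i, u (xidx i) = 0%N) -> (k <= u W)%N ->
  let J := colon (K := K) (init_ideal (Hj a b C j)) 'X_[u] in J f -> extended J f.
Proof.
move=> huX hkW J hJ; apply: (ideal_gen_msupp (phi := tpart (m := m))) => N hN.
split; first exact: tpart_le.
split; last exact: inR_tmono.
have hNu : (u + N)%MM \in msupp (f * 'X_[u]).
  by rewrite mcoeff_msupp mcoeffMX -mcoeff_msupp.
have [g [hg hg0 hgle]] := init_ideal_msupp hJ hNu.
have [h hh hhle] := Hj_lm_gen hg hg0.
have [h' [hh' hh'0 hle]] := Hgen_tpart huX hkW hh (lepm_trans hhle hgle).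
rewrite /J /colon -mpolyXD; exact: init_idealX (ideal_gen_self hh') hh'0 hle.
Qed.

End GroebnerHj.

Section SortedExponents.
Variables (m : nat) (C : seq {ffun 'I_m -> nat}).
Local Notation c_ i := (nth [ffun=> 0%N] C i).
Hypothesis C_sorted : sorted (@tault m) C.

Lemma sorted_tault_cabs i i' :
  (i <= i')%N -> (i' < size C)%N -> (cabs (c_ i) <= cabs (c_ i'))%N.
Proof.
move=> hii' hi'; have hle : sorted (fun x y => cabs x <= cabs y)%N C.
  by apply: sub_sorted C_sorted => x y /orP[/ltnW|/andP[/eqP -> _]].
have htr : transitive (fun x y : {ffun 'I_m -> nat} => cabs x <= cabs y)%N.
  by move=> y x z; apply: leq_trans.
by apply: (sorted_leq_nth htr (fun x => leqnn _) _ hle); rewrite // inE (leq_ltn_trans hii').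
Qed.

Lemma sorted_closed_prefix j :
  (forall c c', c \in C -> (2 <= cabs c')%N -> tault c' c -> c' \in C) -> (j < size C)%N ->
  forall c, (2 <= cabs c < cabs (c_ j))%N -> exists2 i, (i < j)%N & c = c_ i.
Proof.
move=> C_closed hj c /andP[hc2 hcj].
have hcC : c \in C by apply: (C_closed (c_ j)); rewrite ?mem_nth // /tault hcj.
exists (index c C); last by rewrite nth_index.
rewrite ltnNge; apply/negP => hji.
by have := sorted_tault_cabs hji; rewrite index_mem nth_index // => /(_ hcC); lia.
Qed.

End SortedExponents.

Theorem proposition3p2 (K : fieldType) (m : nat) (a b : 'I_m -> nat)
  (C : seq {ffun 'I_m -> nat}) :
  (3 <= m)%N ->
  (forall i, (b i < a i)%N) ->
  (exists i1 i2 : 'I_m, [/\ i1 != i2, b i1 != 0%N & b i2 != 0%N]) ->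
  (forall c, c \in C -> (2 <= cabs c)%N) ->
  sorted (@tault m) C ->
  (forall c c', c \in C -> (2 <= cabs c')%N -> tault c' c -> c' \in C) ->
  groebner (fun f => Gamma0 a b f \/ exists2 c, c \in C & f = Pc K a b c)
           (reesL a b) ->
  forall j : nat, (1 <= j <= size C)%N ->
    let J := colon (K:=K) (init_ideal (Hj a b C j.-1))
                   'X_[lm (Pc K a b (nth [ffun=> 0%N] C j.-1))] in
    forall f, J f <-> extended J f.
Proof.
(* The hypotheses on m, a and b only serve to establish the assumed Groebner basis. *)
move=> _ _ _ C_ge2 C_sorted C_closed C_groebner j /andP[hj1 hjC] J f.
pose c := nth [ffun=> 0%N] C j.-1.
have hj : (j.-1 < size C)%N by lia.
have hc2 : (2 <= cabs c)%N by apply: C_ge2; apply: mem_nth.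
split; last exact: ideal_gen_colon.
have hu : lm (Pc K a b c) = (Defs.tmono (gam a b c) + wmono m (cabs c))%MM.
  by apply: lm_Pc; lia.
have C_closed' := sorted_closed_prefix C_sorted C_closed hj.
apply: (Hj_colon_extended (ltnW hj) C_ge2 _ C_closed' hc2 C_groebner).
- by move=> i hi; apply: sorted_tault_cabs => //; apply: ltnW.
- by move=> i; rewrite hu !coordE.
- by rewrite hu !coordE.
Qed.
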